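(* For every integer $n\ll 0$, every representation $\pi_1(\mathcal{M}(1,n))\to SL_2(\mathbb{R})$ is trivial; consequently every representation $\pi_1(\mathcal{M}(1,n))\to PSL_2(\mathbb{R})$ is trivial.
   Context: $\mathcal{M}$ is the SnapPy census manifold $m137$ with $\pi_1(\mathcal{M})=\langle \lambda,\beta \mid \beta^{-1}\lambda^{-1}\beta^{-1}\lambda^{-1}\beta^{2}\lambda=\lambda\beta^{-2}\lambda^{-1}\beta^{2}\rangle$, where $\lambda$ is the homological longitude and $\mu=\beta^2\lambda^{-1}\beta^{-3}\lambda^{-1}\beta^2$ is a meridian of $\partial\mathcal{M}$. For an integer $n$, $\mathcal{M}(1,n)$ is the Dehn filling of $\mathcal{M}$ along the slope $\mu+n\lambda$, with $\pi_1(\mathcal{M}(1,n))=\pi_1(\mathcal{M})/\langle\langle\mu\lambda^n\rangle\rangle$; it is an integral homology $3$-sphere. *)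

From Stdlib Require Import Reals ZArith List.
Import ListNotations.
Open Scope R_scope.

Record M2 : Type := mkM2 { m11 : R; m12 : R; m21 : R; m22 : R }.

Definition mmul (A B : M2) : M2 :=
  mkM2 (m11 A * m11 B + m12 A * m21 B) (m11 A * m12 B + m12 A * m22 B)
       (m21 A * m11 B + m22 A * m21 B) (m21 A * m12 B + m22 A * m22 B).

Definition mid : M2 := mkM2 1 0 0 1.
Definition mopp (A : M2) : M2 := mkM2 (- m11 A) (- m12 A) (- m21 A) (- m22 A).
Definition mdet (A : M2) : R := m11 A * m22 A - m12 A * m21 A.

Definition inSL2 (A : M2) : Prop := mdet A = 1.

(* inverse of an element of SL_2(R) (adjugate) *)
Definition minv (A : M2) : M2 := mkM2 (m22 A) (- m12 A) (- m21 A) (m11 A).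

Fixpoint mpow_nat (A : M2) (k : nat) : M2 :=
  match k with O => mid | S k' => mmul A (mpow_nat A k') end.

Definition mpowZ (A : M2) (z : Z) : M2 :=
  match z with
  | Z0 => mid
  | Zpos p => mpow_nat A (Pos.to_nat p)
  | Zneg p => mpow_nat (minv A) (Pos.to_nat p)
  end.

Definition mprod (l : list M2) : M2 := List.fold_right mmul mid l.

Definition rel_lhs (L B : M2) : M2 :=
  mprod [minv B; minv L; minv B; minv L; mpowZ B 2; L].
Definition rel_rhs (L B : M2) : M2 :=
  mprod [L; mpowZ B (-2); minv L; mpowZ B 2].
(* meridian mu = b^2 l^-1 b^-3 l^-1 b^2 *)
Definition mu_img (L B : M2) : M2 :=
  mprod [mpowZ B 2; minv L; mpowZ B (-3); minv L; mpowZ B 2].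
Definition fill_img (n : Z) (L B : M2) : M2 := mmul (mu_img L B) (mpowZ L n).

(* A representation pi_1(M(1,n)) -> SL_2(R) is determined by the images
   (L,B) of the generators lambda, beta, which must satisfy the relations. *)
Definition SL2_rep (n : Z) (L B : M2) : Prop :=
  inSL2 L /\ inSL2 B /\ rel_lhs L B = rel_rhs L B /\ fill_img n L B = mid.

Definition psl_eq (A C : M2) : Prop := A = C \/ A = mopp C.

(* A representation pi_1(M(1,n)) -> PSL_2(R), described via SL_2 lifts
   (L,B) of the images of lambda, beta; relations hold in PSL_2(R). *)
Definition PSL2_rep (n : Z) (L B : M2) : Prop :=
  inSL2 L /\ inSL2 B /\ psl_eq (rel_lhs L B) (rel_rhs L B)
  /\ psl_eq (fill_img n L B) mid.

From Stdlib Require Import Reals ZArith Lra Lia Psatz Nsatz.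
Open Scope R_scope.

(* A representation is given by L = image of lambda and B = image of beta in
   SL_2(R); for n = -k <= -3 the filling relation says mu = L^k.  Taking traces
   of the relator (also multiplied by B and by L) and of mu = L^k, mu L = L^(k+1)
   gives polynomial equations in the Fricke coordinates x = tr B, y = tr L,
   z = tr BL.  Unless y = 2 they force the curve
   (y-2)(y+1)x^2((y+1)x^2 - y - 2) = 1.  For |y| < 2 this contradicts
   tr [B, L] >= 2 (L elliptic), y = -2 is impossible outright, and for |y| > 2,
   writing y = t + 1/t, the equations determine (t^k)^2 on the curve as a function
   that stays below t^6, contradicting k >= 3.  Hence y = 2, then x = z = 2, so L
   and B are commuting unipotents, the relator collapses to L = 1, and B = mu = 1.
   The PSL_2 statement follows by lifting to SL_2 and correcting signs. *)

Lemma M2_ext (A C : M2) :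
  m11 A = m11 C -> m12 A = m12 C -> m21 A = m21 C -> m22 A = m22 C -> A = C.
Proof. destruct A, C; simpl; intros; subst; reflexivity. Qed.

Definition mtr (A : M2) : R := m11 A + m22 A.

Lemma mmulA (A B C : M2) : mmul A (mmul B C) = mmul (mmul A B) C.
Proof. destruct A, B, C; apply M2_ext; simpl; ring. Qed.

Lemma mmul1l (A : M2) : mmul mid A = A.
Proof. destruct A; apply M2_ext; simpl; ring. Qed.

Lemma mmul1r (A : M2) : mmul A mid = A.
Proof. destruct A; apply M2_ext; simpl; ring. Qed.

Lemma mmul_minv_l (A : M2) : inSL2 A -> mmul (minv A) A = mid.
Proof. destruct A; unfold inSL2, mdet; simpl; intro; apply M2_ext; simpl; lra. Qed.

Lemma mpow_nat_succ_r (A : M2) (k : nat) : mpow_nat A (S k) = mmul (mpow_nat A k) A.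
Proof.
  induction k as [|k IH]; simpl in *.
  - rewrite mmul1l, mmul1r; reflexivity.
  - rewrite IH, mmulA, IH; reflexivity.
Qed.

Lemma mpow_nat_minv_l (A : M2) (k : nat) :
  inSL2 A -> mmul (mpow_nat (minv A) k) (mpow_nat A k) = mid.
Proof.
  intro hA; induction k as [|k IH]; [apply mmul1l|].
  rewrite mpow_nat_succ_r; simpl.
  rewrite <- mmulA, (mmulA (minv A)), mmul_minv_l, mmul1l by exact hA.
  exact IH.
Qed.

Lemma mpowZ_mid (n : Z) : mpowZ mid n = mid.
Proof.
  assert (H : forall k, mpow_nat mid k = mid)
    by (induction k as [|k IH]; simpl; [|rewrite IH, mmul1l]; reflexivity).
  destruct n; simpl; [reflexivity | apply H |].
  replace (minv mid) with mid by (apply M2_ext; simpl; ring); apply H.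
Qed.

Lemma mopp_involutive (A : M2) : mopp (mopp A) = A.
Proof. destruct A; apply M2_ext; simpl; ring. Qed.

Lemma inSL2_mopp (A : M2) : inSL2 A -> inSL2 (mopp A).
Proof. destruct A; unfold inSL2, mdet; simpl; intro; lra. Qed.

Lemma mmul_mopp_l (A C : M2) : mmul (mopp A) C = mopp (mmul A C).
Proof. destruct A, C; apply M2_ext; simpl; ring. Qed.

Lemma mmul_mopp_r (A C : M2) : mmul A (mopp C) = mopp (mmul A C).
Proof. destruct A, C; apply M2_ext; simpl; ring. Qed.

Lemma minv_mopp (A : M2) : minv (mopp A) = mopp (minv A).
Proof. destruct A; apply M2_ext; simpl; ring. Qed.

(** * Traces of powers *)

(* [cheb y k = 2 T_k(y/2)], with [T_k] the Chebyshev polynomial. *)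
Fixpoint cheb (y : R) (k : nat) : R :=
  match k with
  | O => 2
  | S O => y
  | S ((S k2) as k1) => y * cheb y k1 - cheb y k2
  end.

Lemma mtr_cayley_hamilton (A P : M2) :
  inSL2 A -> mtr (mmul A (mmul A P)) = mtr A * mtr (mmul A P) - mtr P.
Proof.
  destruct A as [a b c d], P as [e f g h]; unfold inSL2, mdet, mtr; simpl.
  intro; nsatz.
Qed.

Lemma mtr_mpow_nat (A : M2) (k : nat) :
  inSL2 A -> mtr (mpow_nat A k) = cheb (mtr A) k.
Proof.
  intro hA.
  enough (H : mtr (mpow_nat A k) = cheb (mtr A) k /\
              mtr (mpow_nat A (S k)) = cheb (mtr A) (S k)) by apply H.
  induction k as [|k [IH1 IH2]].
  - destruct A; unfold mtr; simpl; split; ring.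
  - split; [exact IH2|].
    change (mpow_nat A (S (S k))) with (mmul A (mmul A (mpow_nat A k))).
    rewrite mtr_cayley_hamilton by exact hA.
    change (mmul A (mpow_nat A k)) with (mpow_nat A (S k)).
    rewrite IH1, IH2; reflexivity.
Qed.

Lemma cheb_2 (k : nat) : cheb 2 k = 2.
Proof.
  enough (H : cheb 2 k = 2 /\ cheb 2 (S k) = 2) by apply H.
  induction k as [|k [IH1 IH2]]; [split; reflexivity|].
  split; [exact IH2|].
  change (cheb 2 (S (S k))) with (2 * cheb 2 (S k) - cheb 2 k).
  rewrite IH1, IH2; ring.
Qed.

Lemma cheb_inv_sum (t : R) (k : nat) : t <> 0 -> cheb (t + / t) k = t ^ k + / t ^ k.
Proof.
  intro ht.
  enough (H : cheb (t + / t) k = t ^ k + / t ^ k /\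
              cheb (t + / t) (S k) = t ^ S k + / t ^ S k) by apply H.
  induction k as [|k [IH1 IH2]]; [simpl; split; field; exact ht|].
  split; [exact IH2|].
  change (cheb (t + / t) (S (S k)))
    with ((t + / t) * cheb (t + / t) (S k) - cheb (t + / t) k).
  rewrite IH1, IH2; simpl.
  field; split; [apply pow_nonzero|]; exact ht.
Qed.

Lemma pow_sq_ge_cube (t : R) (k : nat) : (3 <= k)%nat -> 1 < t * t -> t^6 <= (t^k)^2.
Proof.
  intros hk ht.
  replace (t^6) with ((t * t)^3) by ring.
  replace ((t^k)^2) with ((t * t)^k) by (rewrite Rpow_mult_distr; ring).
  apply Rle_pow; [lra | exact hk].
Qed.

(** * Fricke polynomials of the relator and of the meridian *)

Definition fricke_rel (x y z : R) : R :=
  - x^4 + x^3*y*z + x^3*z - x^2*y^2 - x^2*y*z^2 - x^2*z^2 + 4*x^2 + x*y^2*z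
  + x*z^3 - 4*x*z + y - 2.
Definition fricke_relB (x y z : R) : R :=
  - x^5 + x^4*y*z - x^3*y^2 - x^3*z^2 + 5*x^3 - x^2*y*z + x*y^2 + x*y + x*z^2
  - 5*x - z.
Definition fricke_relL (x y z : R) : R :=
  - x^4*y + x^3*y^2*z + x^3*y*z - x^2*y^3 - x^2*y^2*z^2 - x^2*y*z^2 + 4*x^2*y
  + x^2 + x*y^3*z + x*y*z^3 - 5*x*y*z + y^2 - y + z^2 - 2.
Definition fricke_mu (x y z : R) : R :=
  - x^7 + x^6*y*z - x^5*y^2 - x^5*z^2 + 7*x^5 - 3*x^4*y*z + 3*x^3*y^2
  + 3*x^3*z^2 - 14*x^3 + 2*x^2*y*z - x*y^2 - 2*x*z^2 + 7*x - y*z.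
Definition fricke_muL (x y z : R) : R :=
  - x^6*z + x^5*y*z^2 + x^5*y - 2*x^4*y^2*z - x^4*z^3 + 5*x^4*z + x^3*y^3
  - 4*x^3*y + x^2*y^2*z + x^2*z^3 - 4*x^2*z + x*y - z.

Ltac fricke_identity L B :=
  destruct L as [p q r s], B as [a b c d];
  unfold inSL2, mdet, mtr, rel_lhs, rel_rhs, mu_img, mprod, mpowZ, minv, mmul, mid,
    fricke_rel, fricke_relB, fricke_relL, fricke_mu, fricke_muL;
  simpl; cbn [pow]; intros; nsatz.

Lemma mtr_rel_sub (L B : M2) : inSL2 L -> inSL2 B ->
  mtr (rel_lhs L B) - mtr (rel_rhs L B) = fricke_rel (mtr B) (mtr L) (mtr (mmul B L)).
Proof. fricke_identity L B. Qed.

Lemma mtr_relB_sub (L B : M2) : inSL2 L -> inSL2 B ->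
  mtr (mmul (rel_lhs L B) B) - mtr (mmul (rel_rhs L B) B)
  = fricke_relB (mtr B) (mtr L) (mtr (mmul B L)).
Proof. fricke_identity L B. Qed.

Lemma mtr_relL_sub (L B : M2) : inSL2 L -> inSL2 B ->
  mtr (mmul (rel_lhs L B) L) - mtr (mmul (rel_rhs L B) L)
  = fricke_relL (mtr B) (mtr L) (mtr (mmul B L)).
Proof. fricke_identity L B. Qed.

Lemma mtr_mu_img (L B : M2) : inSL2 L -> inSL2 B ->
  mtr (mu_img L B) = fricke_mu (mtr B) (mtr L) (mtr (mmul B L)).
Proof. fricke_identity L B. Qed.

Lemma mtr_mu_img_mul (L B : M2) : inSL2 L -> inSL2 B ->
  mtr (mmul (mu_img L B) L) = fricke_muL (mtr B) (mtr L) (mtr (mmul B L)).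
Proof. fricke_identity L B. Qed.

Lemma fricke_at_2 (x z : R) :
  fricke_rel x 2 z = 0 -> fricke_relB x 2 z = 0 -> fricke_relL x 2 z = 0 ->
  fricke_mu x 2 z = 2 -> x = 2 /\ z = 2.
Proof.
  unfold fricke_rel, fricke_relB, fricke_relL, fricke_mu; cbn [pow]; intros.
  split; nsatz.
Qed.

Lemma fricke_comm_trace (x y z : R) :
  fricke_rel x y z = 0 -> fricke_relL x y z = 0 ->
  x^2 + y^2 + z^2 - x*y*z - 2 = y^2 - y.
Proof. unfold fricke_rel, fricke_relL; cbn [pow]; intros; nsatz. Qed.

Lemma fricke_curve (x y z : R) :
  fricke_rel x y z = 0 -> fricke_relL x y z = 0 -> y <> 2 ->
  (y - 2) * (y + 1) * x^2 * ((y + 1) * x^2 - y - 2) = 1.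
Proof.
  intros h1 h2 hy.
  assert (hu : (y - 2) * / (y - 2) = 1) by (field; lra).
  unfold fricke_rel, fricke_relL in *; cbn [pow] in *; clear hy; nsatz.
Qed.

Lemma curve_not_elliptic (x y : R) :
  y <> 2 -> y^2 <= 4 -> (y^2 < 4 -> 2 <= y^2 - y) ->
  (y - 2) * (y + 1) * x^2 * ((y + 1) * x^2 - y - 2) <> 1.
Proof.
  intros hy2 hy4 hell hcurve.
  destruct (Req_dec (y^2) 4) as [e | hlt].
  - assert (y = -2) by nra; subst y.
    assert (0 <= x^2 * x^2) by nra. nra.
  - specialize (hell ltac:(lra)).
    assert (hy : -2 < y <= -1) by nra.
    assert (0 <= (y - 2) * ((y + 1) * x^2) * - ((y + 1) * x^2 - y - 2)).
    { apply Rmult_le_pos; [|nra]. assert (0 <= x^2) by nra. nra. }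
    nra.
Qed.

(** * The hyperbolic case *)

Definition power_alpha (x y : R) : R := x * (- y^3 - y^2 + 4*y + 1 + (y^3 - 3*y - 1) * x^2).
Definition power_beta (x y : R) : R :=
  x * (y^3 + 2*y^2 - 2*y - 2 + (- y^2 + y + 1) * (y + 1) * x^2).

(* Knowing both tr mu = T + 1/T and tr mu L = tT + 1/(tT) recovers T itself, not
   only T + 1/T. *)
Lemma fricke_power (x y z t T : R) :
  fricke_rel x y z = 0 -> fricke_relB x y z = 0 -> fricke_relL x y z = 0 ->
  t * y = t^2 + 1 -> T <> 0 -> y^2 <> 4 ->
  fricke_mu x y z = T + / T -> fricke_muL x y z = t * T + / (t * T) ->
  (y + 1) * T = (y + 1) * power_alpha x y + t * power_beta x y.
Proof.
  intros h1 h2 h3 hy hT hy4 hmu hmuL.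
  assert (ht : t <> 0) by (intros ->; lra).
  assert (ht' : t * / t = 1) by (field; exact ht).
  assert (hT' : T * / T = 1) by (field; exact hT).
  assert (htT : / (t * T) = / t * / T) by (field; split; assumption).
  assert (hu : (y^2 - 4) * / (y^2 - 4) = 1) by (field; lra).
  rewrite htT in hmuL.
  unfold fricke_rel, fricke_relB, fricke_relL, fricke_mu, fricke_muL, power_alpha,
    power_beta in *; cbn [pow] in *.
  clear ht hT hy4 htT.
  nsatz.
Qed.

Definition sq_const_num (t : R) : R :=
  1 + 3*t + 2*t^2 - 3*t^4 - 5*t^5 - 2*t^6 - 2*t^7 + t^8 + t^9 + t^10 + t^11.
Definition sq_const_den (t : R) : R := t^3 * (t - 1) * (t^2 + t + 1)^3.
Definition sq_slope_num (t : R) : R :=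
  1 + 2*t + t^2 + t^3 - 2*t^4 - 2*t^5 - 2*t^6 - 2*t^7 + t^8 + t^9 + 2*t^10 + t^11.
Definition sq_slope_den (t : R) : R := t^2 * (t^2 + t + 1)^3.

Lemma power_sq_on_curve (t y x T : R) :
  t * y = t^2 + 1 ->
  (y - 2) * (y + 1) * x^2 * ((y + 1) * x^2 - y - 2) = 1 ->
  (y + 1) * T = (y + 1) * power_alpha x y + t * power_beta x y ->
  T^2 * sq_const_den t * sq_slope_den t
  = sq_const_num t * sq_slope_den t + sq_slope_num t * sq_const_den t * ((y + 1) * x^2).
Proof.
  unfold sq_const_num, sq_const_den, sq_slope_num, sq_slope_den, power_alpha, power_beta.
  cbn [pow]; intros; nsatz.
Qed.

Lemma curve_in_t (t y w : R) :
  t * y = t^2 + 1 -> (y - 2) * w * (w - y - 2) = 1 ->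
  (t - 1)^2 * w * (t * w - (t + 1)^2) = t^2.
Proof. cbn [pow]; intros; nsatz. Qed.

Ltac positive_coefficients s :=
  ring_simplify;
  repeat match goal with
  | |- context [s ^ ?n] =>
      let u := fresh "u" in
      assert (0 < s ^ n) by (apply pow_lt; assumption);
      set (u := s ^ n) in *; clearbody u
  end;
  lra.

Lemma pos_right_of (a : R) (P : R -> R) :
  (forall s, 0 < s -> 0 < P (a + s)) -> forall t, a < t -> 0 < P t.
Proof. intros H t ht; replace t with (a + (t - a)) by ring; apply H; lra. Qed.

Lemma pos_left_of (a : R) (P : R -> R) :
  (forall s, 0 < s -> 0 < P (a - s)) -> forall t, t < a -> 0 < P t.
Proof. intros H t ht; replace t with (a - (a - t)) by ring; apply H; lra. Qed.

Lemma sq_slope_num_pos (t : R) : 1 < t -> 0 < sq_slope_num t.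
Proof.
  revert t; apply pos_right_of; intros s hs; unfold sq_slope_num.
  positive_coefficients s.
Qed.

Lemma sq_const_den_pos (t : R) : 1 < t * t -> 0 < sq_const_den t.
Proof.
  intro ht; unfold sq_const_den.
  assert (0 < (t^2 + t + 1)^3) by (apply pow_lt; nra).
  assert (0 < t^3 * (t - 1)).
  { replace (t^3 * (t - 1)) with (t^2 * (t * (t - 1))) by ring.
    apply Rmult_lt_0_compat; nra. }
  nra.
Qed.

Lemma sq_slope_den_pos (t : R) : 1 < t * t -> 0 < sq_slope_den t.
Proof.
  intro ht; unfold sq_slope_den.
  assert (0 < (t^2 + t + 1)^3) by (apply pow_lt; nra).
  assert (0 < t^2) by nra.
  nra.
Qed.

Definition sq_gap_num (t : R) : R :=
  (t^6 * sq_const_den t - sq_const_num t) * sq_slope_den t.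
Definition sq_gap_den (t : R) : R := sq_const_den t * sq_slope_num t.

Lemma sq_gap_num_pos (t : R) : 1 < t -> 0 < sq_gap_num t.
Proof.
  intro ht; unfold sq_gap_num.
  apply Rmult_lt_0_compat; [|apply sq_slope_den_pos; nra].
  revert t ht; apply pos_right_of; intros s hs.
  unfold sq_const_den, sq_const_num; positive_coefficients s.
Qed.

Lemma sq_gap_curve_pos (t : R) : 1 < t ->
  0 < (t - 1)^2 * sq_gap_num t * (t * sq_gap_num t - (t + 1)^2 * sq_gap_den t)
      - t^2 * sq_gap_den t ^ 2.
Proof.
  revert t; apply (pos_right_of 1 (fun t => _)); intros s hs.
  unfold sq_gap_num, sq_gap_den, sq_const_den, sq_const_num, sq_slope_den, sq_slope_num.
  positive_coefficients s.
Qed.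

(* The curve polynomial is increasing in w past (t+1)^2/t and, by
   [sq_gap_curve_pos], already positive at w = sq_gap_num/sq_gap_den, so its root
   lies below that threshold. *)
Lemma power_sq_bound_above_one (t w : R) :
  1 < t -> 0 <= w -> (t - 1)^2 * w * (t * w - (t + 1)^2) = t^2 ->
  sq_const_num t * sq_slope_den t + sq_slope_num t * sq_const_den t * w
  < t^6 * sq_const_den t * sq_slope_den t.
Proof.
  intros ht hw hcurve.
  assert (hd : 0 < sq_gap_den t).
  { apply Rmult_lt_0_compat; [apply sq_const_den_pos; nra | apply sq_slope_num_pos, ht]. }
  pose proof (sq_gap_num_pos t ht) as hn.
  pose proof (sq_gap_curve_pos t ht) as hV.
  assert (hw' : 0 < t * w - (t + 1)^2).
  { apply Rnot_le_lt; intro hle.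
    assert (0 <= (t - 1)^2 * w * - (t * w - (t + 1)^2))
      by (apply Rmult_le_pos; [apply Rmult_le_pos; [apply pow2_ge_0 | exact hw] | lra]).
    nra. }
  enough (sq_gap_den t * w < sq_gap_num t)
    by (unfold sq_gap_den, sq_gap_num in *; lra).
  apply Rnot_le_lt; intro hge.
  assert (0 <= (t - 1)^2 * (sq_gap_den t * w - sq_gap_num t)
                * (t * (sq_gap_den t * w + sq_gap_num t) - (t + 1)^2 * sq_gap_den t)).
  { apply Rmult_le_pos; [apply Rmult_le_pos|]; nra. }
  assert (sq_gap_den t ^ 2 * ((t - 1)^2 * w * (t * w - (t + 1)^2) - t^2)
          = (t - 1)^2 * (sq_gap_den t * w - sq_gap_num t)
            * (t * (sq_gap_den t * w + sq_gap_num t) - (t + 1)^2 * sq_gap_den t)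
          + ((t - 1)^2 * sq_gap_num t * (t * sq_gap_num t - (t + 1)^2 * sq_gap_den t)
             - t^2 * sq_gap_den t ^ 2)) by ring.
  rewrite hcurve in *; lra.
Qed.

Lemma quadratic_neg (a b c w : R) : a < 0 -> b^2 < 4 * a * c -> a * w^2 + b * w + c < 0.
Proof.
  intros ha hd.
  assert (0 < 4 * a * (a * w^2 + b * w + c)).
  { replace (4 * a * (a * w^2 + b * w + c)) with ((2 * a * w + b)^2 + (4 * a * c - b^2))
      by ring.
    pose proof (pow2_ge_0 (2 * a * w + b)); lra. }
  nra.
Qed.

(* Adding [t^3 (t-1) (t^2+t+1)^6] times the curve equation to ten times the
   difference of the two sides of [power_sq_bound_below_minus_one] gives this
   quadratic in w, which is negative definite for t < -1. *)
Definition sq_quad_a (t : R) : R := t^4 * (t - 1)^3 * (t^2 + t + 1)^6.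
Definition sq_quad_b (t : R) : R :=
  10 * sq_slope_num t * sq_const_den t - t^3 * (t - 1)^3 * (t + 1)^2 * (t^2 + t + 1)^6.
Definition sq_quad_c (t : R) : R :=
  10 * (sq_const_num t * sq_slope_den t - t^6 * sq_const_den t * sq_slope_den t)
  - t^5 * (t - 1) * (t^2 + t + 1)^6.

Lemma power_sq_bound_below_minus_one (t w : R) :
  t < -1 -> (t - 1)^2 * w * (t * w - (t + 1)^2) = t^2 ->
  sq_const_num t * sq_slope_den t + sq_slope_num t * sq_const_den t * w
  < t^6 * sq_const_den t * sq_slope_den t.
Proof.
  intros ht hcurve.
  assert (ha : sq_quad_a t < 0).
  { enough (0 < - sq_quad_a t) by lra.
    clear hcurve; revert t ht; apply (pos_left_of (-1) (fun t => _)); intros s hs.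
    unfold sq_quad_a; positive_coefficients s. }
  assert (hdisc : sq_quad_b t ^ 2 < 4 * sq_quad_a t * sq_quad_c t).
  { enough (0 < 4 * sq_quad_a t * sq_quad_c t - sq_quad_b t ^ 2) by lra.
    clear ha hcurve; revert t ht; apply (pos_left_of (-1) (fun t => _)); intros s hs.
    unfold sq_quad_a, sq_quad_b, sq_quad_c, sq_const_num, sq_const_den,
      sq_slope_num, sq_slope_den.
    positive_coefficients s. }
  pose proof (quadratic_neg _ _ _ w ha hdisc).
  assert (10 * (sq_const_num t * sq_slope_den t + sq_slope_num t * sq_const_den t * w
                - t^6 * sq_const_den t * sq_slope_den t)
          + t^3 * (t - 1) * (t^2 + t + 1)^6 * ((t - 1)^2 * w * (t * w - (t + 1)^2) - t^2)
          = sq_quad_a t * w^2 + sq_quad_b t * w + sq_quad_c t)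
    by (unfold sq_quad_a, sq_quad_b, sq_quad_c; ring).
  rewrite hcurve in *; lra.
Qed.

Lemma hyperbolic_root (y : R) : 4 < y^2 ->
  exists t, t * y = t^2 + 1 /\ (1 < t \/ t < -1).
Proof.
  intro hy.
  assert (hs : 0 <= y^2 - 4) by lra.
  pose proof (sqrt_sqrt _ hs).
  assert (0 < sqrt (y^2 - 4)) by (apply sqrt_lt_R0; lra).
  destruct (Rlt_or_le 0 y).
  - exists ((y + sqrt (y^2 - 4)) / 2); split; [nra | left; nra].
  - exists ((y - sqrt (y^2 - 4)) / 2); split; [nra | right; nra].
Qed.

Lemma fricke_not_hyperbolic (x y z : R) (k : nat) : (3 <= k)%nat -> 4 < y^2 ->
  fricke_rel x y z = 0 -> fricke_relB x y z = 0 -> fricke_relL x y z = 0 ->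
  fricke_mu x y z = cheb y k -> fricke_muL x y z = cheb y (S k) -> False.
Proof.
  intros hk hy4 h1 h2 h3 hmu hmuL.
  destruct (hyperbolic_root y hy4) as [t [hty ht]].
  assert (ht1 : 1 < t * t) by (destruct ht; nra).
  assert (ht0 : t <> 0) by nra.
  assert (hy : y = t + / t) by (apply (Rmult_eq_reg_l t); [field_simplify; lra | exact ht0]).
  assert (hT0 : t ^ k <> 0) by (apply pow_nonzero, ht0).
  rewrite hy, cheb_inv_sum, <- hy in hmu, hmuL by exact ht0.
  rewrite <- tech_pow_Rmult in hmuL.
  pose proof (fricke_curve x y z h1 h3 ltac:(nra)) as hcurve.
  pose proof (fricke_power x y z t (t ^ k) h1 h2 h3 hty hT0 ltac:(nra) hmu hmuL) as hT.
  pose proof (power_sq_on_curve t y x (t ^ k) hty hcurve hT).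
  pose proof (curve_in_t t y ((y + 1) * x^2) hty ltac:(lra)) as hcurve_t.
  pose proof (pow_sq_ge_cube t k hk ht1).
  assert (0 < sq_const_den t * sq_slope_den t)
    by (apply Rmult_lt_0_compat; [apply sq_const_den_pos | apply sq_slope_den_pos]; exact ht1).
  assert (sq_const_num t * sq_slope_den t + sq_slope_num t * sq_const_den t * ((y + 1) * x^2)
          < t^6 * sq_const_den t * sq_slope_den t).
  { destruct ht as [ht | ht].
    - apply power_sq_bound_above_one; [exact ht | | exact hcurve_t].
      apply Rmult_le_pos; [nra | apply pow2_ge_0].
    - apply power_sq_bound_below_minus_one; [exact ht | exact hcurve_t]. }
  nra.
Qed.

Lemma fricke_parabolic (x y z : R) (k : nat) : (3 <= k)%nat ->
  fricke_rel x y z = 0 -> fricke_relB x y z = 0 -> fricke_relL x y z = 0 ->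
  fricke_mu x y z = cheb y k -> fricke_muL x y z = cheb y (S k) ->
  (y^2 < 4 -> 2 <= x^2 + y^2 + z^2 - x*y*z - 2) ->
  x = 2 /\ y = 2 /\ z = 2.
Proof.
  intros hk h1 h2 h3 hmu hmuL hell.
  destruct (Req_dec y 2) as [-> | hy2].
  - rewrite cheb_2 in hmu.
    destruct (fricke_at_2 x z h1 h2 h3 hmu); auto.
  - exfalso.
    destruct (Rlt_or_le 4 (y^2)) as [hy4 | hy4].
    + exact (fricke_not_hyperbolic x y z k hk hy4 h1 h2 h3 hmu hmuL).
    + apply (curve_not_elliptic x y hy2 hy4).
      * rewrite <- (fricke_comm_trace x y z h1 h3); exact hell.
      * exact (fricke_curve x y z h1 h3 hy2).
Qed.

(** * Representations into SL_2(R) *)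

Lemma comm_trace_sos (p q r s a b c d : R) : p*s - q*r = 1 -> a*d - b*c = 1 ->
  4 * r^2 * ((a + d)^2 + (p + s)^2 + (a*p + b*r + (c*q + d*s))^2
             - (a + d) * (p + s) * (a*p + b*r + (c*q + d*s)) - 4)
  = (2 * (r*(a - d) - 2*p*c) + (p + s) * (c - (r*a*p + b*r^2 - c*p^2 - p*d*r)))^2
    + (4 - (p + s)^2) * (c + (r*a*p + b*r^2 - c*p^2 - p*d*r))^2.
Proof. cbn [pow]; intros; nsatz. Qed.

(* The right-hand side is tr (B L B^-1 L^-1): a commutator with an elliptic
   element has trace at least 2. *)
Lemma mtr_comm_elliptic (L B : M2) : inSL2 L -> inSL2 B -> mtr L ^ 2 < 4 ->
  2 <= mtr B ^ 2 + mtr L ^ 2 + mtr (mmul B L) ^ 2 - mtr B * mtr L * mtr (mmul B L) - 2.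
Proof.
  destruct L as [p q r s], B as [a b c d]; unfold inSL2, mdet, mtr.
  cbn [mmul m11 m12 m21 m22]; intros hL hB hy.
  assert (hr : r <> 0) by (intros ->; pose proof (pow2_ge_0 (p - s)); nra).
  assert (0 < r^2) by (rewrite <- Rsqr_pow2; apply Rsqr_pos_lt, hr).
  pose proof (comm_trace_sos p q r s a b c d hL hB) as e.
  match type of e with _ = ?u ^ 2 + (4 - _) * ?v ^ 2 =>
    pose proof (pow2_ge_0 u); pose proof (pow2_ge_0 v) end.
  assert (0 <= (4 - (p + s)^2) * (c + (r*a*p + b*r^2 - c*p^2 - p*d*r))^2) by nra.
  nra.
Qed.

(* Traces (2, 2, 2) make L and B commuting unipotents, and for commuting L, B the
   relator reads L^-1 = 1. *)
Lemma rel_parabolic_trivial (L B : M2) : inSL2 L -> inSL2 B ->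
  mtr L = 2 -> mtr B = 2 -> mtr (mmul B L) = 2 -> rel_lhs L B = rel_rhs L B -> L = mid.
Proof.
  intros hL hB htL htB htBL hrel.
  assert (e11 := f_equal m11 hrel); assert (e12 := f_equal m12 hrel);
    assert (e21 := f_equal m21 hrel); clear hrel.
  destruct L as [p q r s], B as [a b c d].
  unfold inSL2, mdet, mtr, rel_lhs, rel_rhs, mprod, mpowZ, minv, mmul, mid in *.
  simpl in *; cbn [pow] in *.
  assert (hp : p = 1) by nsatz.
  assert (hq : q = 0) by nsatz.
  assert (hr : r = 0) by nsatz.
  apply M2_ext; simpl; [exact hp | exact hq | exact hr | lra].
Qed.

Lemma mu_img_mid_l (B : M2) : inSL2 B -> mu_img mid B = B.
Proof.
  destruct B as [a b c d]; unfold inSL2, mdet; intro hB.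
  unfold mu_img, mprod, mpowZ, minv, mmul, mid; simpl.
  apply M2_ext; simpl; cbn [pow] in *; nsatz.
Qed.

Lemma fill_img_neg (p : positive) (L B : M2) : inSL2 L ->
  fill_img (Zneg p) L B = mid -> mu_img L B = mpow_nat L (Pos.to_nat p).
Proof.
  unfold fill_img; simpl; intros hL hfill.
  rewrite <- (mmul1r (mu_img L B)), <- (mpow_nat_minv_l L (Pos.to_nat p) hL).
  rewrite mmulA, hfill; apply mmul1l.
Qed.

Lemma SL2_rep_trivial (n : Z) :
  (n <= -3)%Z -> forall L B : M2, SL2_rep n L B -> L = mid /\ B = mid.
Proof.
  intros hn L B [hL [hB [hrel hfill]]].
  destruct n as [| | p]; try lia.
  pose proof (fill_img_neg p L B hL hfill) as hmu.
  pose proof (mtr_rel_sub L B hL hB) as hrel0.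
  pose proof (mtr_relB_sub L B hL hB) as hrelB.
  pose proof (mtr_relL_sub L B hL hB) as hrelL.
  rewrite hrel, Rminus_diag in hrel0, hrelB, hrelL.
  pose proof (mtr_mu_img L B hL hB) as htmu.
  pose proof (mtr_mu_img_mul L B hL hB) as htmuL.
  rewrite hmu, mtr_mpow_nat in htmu by exact hL.
  rewrite hmu, <- mpow_nat_succ_r, mtr_mpow_nat in htmuL by exact hL.
  destruct (fricke_parabolic _ _ _ (Pos.to_nat p) ltac:(lia)
              (eq_sym hrel0) (eq_sym hrelB) (eq_sym hrelL) (eq_sym htmu) (eq_sym htmuL)
              (mtr_comm_elliptic L B hL hB)) as [htB [htL htBL]].
  pose proof (rel_parabolic_trivial L B hL hB htL htB htBL hrel); subst L.
  split; [reflexivity|].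
  unfold fill_img in hfill; rewrite mpowZ_mid, mmul1r, mu_img_mid_l in hfill by exact hB.
  exact hfill.
Qed.

(** * Lifting from PSL_2(R) *)

Lemma psl_eq_refl (A : M2) : psl_eq A A.
Proof. left; reflexivity. Qed.

Lemma psl_eq_sym (A C : M2) : psl_eq A C -> psl_eq C A.
Proof. intros [-> | ->]; [left | right; rewrite mopp_involutive]; reflexivity. Qed.

Lemma psl_eq_trans (A C D : M2) : psl_eq A C -> psl_eq C D -> psl_eq A D.
Proof.
  intros [-> | ->] [-> | ->]; rewrite ?mopp_involutive;
    [left | right | right | left]; reflexivity.
Qed.

Lemma psl_eq_mopp (A : M2) : psl_eq (mopp A) A.
Proof. right; reflexivity. Qed.

Lemma psl_eq_mmul (A A' C C' : M2) :
  psl_eq A A' -> psl_eq C C' -> psl_eq (mmul A C) (mmul A' C').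
Proof.
  intros [-> | ->] [-> | ->];
    rewrite ?mmul_mopp_l, ?mmul_mopp_r, ?mopp_involutive;
    [left | right | right | left]; reflexivity.
Qed.

Lemma psl_eq_mpowZ_mopp (A : M2) (n : Z) : psl_eq (mpowZ (mopp A) n) (mpowZ A n).
Proof.
  assert (H : forall C k, psl_eq (mpow_nat (mopp C) k) (mpow_nat C k)).
  { intros C k; induction k as [|k IH]; simpl; [apply psl_eq_refl|].
    apply psl_eq_mmul; [apply psl_eq_mopp | exact IH]. }
  destruct n; simpl; [apply psl_eq_refl | apply H | rewrite minv_mopp; apply H].
Qed.

Lemma rel_lhs_mopp_l (L B : M2) : rel_lhs (mopp L) B = mopp (rel_lhs L B).
Proof. destruct L, B; apply M2_ext; simpl; ring. Qed.

Lemma rel_rhs_mopp_l (L B : M2) : rel_rhs (mopp L) B = rel_rhs L B.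
Proof. destruct L, B; apply M2_ext; simpl; ring. Qed.

Lemma rel_lhs_mopp_r (L B : M2) : rel_lhs L (mopp B) = rel_lhs L B.
Proof. destruct L, B; apply M2_ext; simpl; ring. Qed.

Lemma rel_rhs_mopp_r (L B : M2) : rel_rhs L (mopp B) = rel_rhs L B.
Proof. destruct L, B; apply M2_ext; simpl; ring. Qed.

Lemma mu_img_mopp_l (L B : M2) : mu_img (mopp L) B = mu_img L B.
Proof. destruct L, B; apply M2_ext; simpl; ring. Qed.

Lemma mu_img_mopp_r (L B : M2) : mu_img L (mopp B) = mopp (mu_img L B).
Proof. destruct L, B; apply M2_ext; simpl; ring. Qed.

Lemma PSL2_rep_lift (n : Z) (L B : M2) : PSL2_rep n L B ->
  exists L' B', psl_eq L L' /\ psl_eq B B' /\ SL2_rep n L' B'.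
Proof.
  intros [hL [hB [hrel hfill]]].
  assert (hL' : exists L', psl_eq L L' /\ inSL2 L' /\ rel_lhs L' B = rel_rhs L' B
                           /\ psl_eq (fill_img n L' B) mid).
  { destruct hrel as [hrel | hrel]; [exists L; split; [apply psl_eq_refl | auto]|].
    exists (mopp L); split; [apply psl_eq_sym, psl_eq_mopp|].
    split; [apply inSL2_mopp, hL|].
    rewrite rel_lhs_mopp_l, rel_rhs_mopp_l, hrel, mopp_involutive; split; [reflexivity|].
    apply (psl_eq_trans _ (fill_img n L B)); [|exact hfill].
    unfold fill_img; rewrite mu_img_mopp_l.
    apply psl_eq_mmul; [apply psl_eq_refl | apply psl_eq_mpowZ_mopp]. }
  destruct hL' as [L' [eL [hL' [hrel' hfill']]]].
  exists L'; destruct hfill' as [hfill' | hfill'].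
  - exists B; repeat split; auto using psl_eq_refl.
  - exists (mopp B); split; [exact eL|]; split; [apply psl_eq_sym, psl_eq_mopp|].
    repeat split; [exact hL' | apply inSL2_mopp, hB | |].
    + rewrite rel_lhs_mopp_r, rel_rhs_mopp_r; exact hrel'.
    + unfold fill_img in *; rewrite mu_img_mopp_r, mmul_mopp_l, hfill'.
      apply mopp_involutive.
Qed.

Theorem mainTheorem5 :
  exists N : Z, forall n : Z, (n <= N)%Z ->
    (forall L B : M2, SL2_rep n L B -> L = mid /\ B = mid) /\
    (forall L B : M2, PSL2_rep n L B -> psl_eq L mid /\ psl_eq B mid).
Proof.
  exists (-3)%Z; intros n hn; split; [exact (SL2_rep_trivial n hn)|].
  intros L B hrep.
  destruct (PSL2_rep_lift n L B hrep) as [L' [B' [eL [eB hrep']]]].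
  destruct (SL2_rep_trivial n hn L' B' hrep') as [-> ->].
  split; assumption.
Qed.
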